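(* Let $X$ be a $T_1$ topological space with at least three points. Then $\mathrm{diam}(\Gamma(C_c(X)_F))=\mathrm{gr}(\Gamma(C_c(X)_F))=3$.
   Context: $C_c(X)_F$ denotes the set of all functions $f:X\to\mathbb{R}$ whose range is countable and whose set of points of discontinuity is finite; it is a commutative ring under pointwise operations. $\Gamma(C_c(X)_F)$ is the zero-divisor graph: vertices are the nonzero zero divisors of $C_c(X)_F$, and distinct vertices $f,g$ are adjacent iff $fg=0$. The diameter is the maximum over pairs of vertices of the length of a shortest path between them; the girth is the length of a shortest cycle ($\infty$ if there is none). *)

From HB Require Import structures.
From mathcomp Require Import all_boot all_order all_algebra.
From mathcomp Require Import all_classical all_reals all_analysis.
Set Implicit Arguments. Unset Strict Implicit. Unset Printing Implicit Defensive.
Import Order.TTheory GRing.Theory Num.Theory.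
Import numFieldNormedType.Exports.
Local Open Scope classical_set_scope.
Local Open Scope ring_scope.

Definition in_CcF {X : topologicalType} {R : realType} (f : X -> R) : Prop :=
  countable (range f) /\ finite_set [set x : X | ~ {for x, continuous f}].

Definition fzero {X : Type} {R : realType} : X -> R := fun _ => 0.
Definition fmul {X : Type} {R : realType} (f g : X -> R) : X -> R :=
  fun x => f x * g x.

Definition zd_vertex {X : topologicalType} {R : realType} (f : X -> R) : Prop :=
  in_CcF f /\ f <> fzero /\
  exists g : X -> R, in_CcF g /\ g <> fzero /\ fmul f g = fzero.

Definition zd_adj {X : topologicalType} {R : realType} (f g : X -> R) : Prop :=
  zd_vertex f /\ zd_vertex g /\ f <> g /\ fmul f g = fzero.

Inductive walk {V : Type} (adj : V -> V -> Prop) : V -> V -> nat -> Prop :=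
| walk_nil u : walk adj u u 0
| walk_cons u w v n : adj u w -> walk adj w v n -> walk adj u v n.+1.

Definition graph_dist {V : Type} (adj : V -> V -> Prop) (u v : V) (n : nat) : Prop :=
  walk adj u v n /\ forall m, walk adj u v m -> (n <= m)%N.

Definition graph_diam {V : Type} (vert : V -> Prop) (adj : V -> V -> Prop)
  (d : nat) : Prop :=
  (forall u v, vert u -> vert v -> exists n, (n <= d)%N /\ walk adj u v n) /\
  (exists u v, vert u /\ vert v /\ graph_dist adj u v d).

Definition graph_cycle {V : Type} (adj : V -> V -> Prop) (n : nat) : Prop :=
  (3 <= n)%N /\ exists c : nat -> V,
    (forall i j, (i < n)%N -> (j < n)%N -> c i = c j -> i = j) /\
    (forall i, (i < n)%N -> adj (c i) (c ((i.+1) %% n)%N)).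

Definition graph_girth {V : Type} (adj : V -> V -> Prop) (g : nat) : Prop :=
  graph_cycle adj g /\ forall m, graph_cycle adj m -> (g <= m)%N.

From HB Require Import structures.
From mathcomp Require Import all_boot all_order all_algebra.
From mathcomp Require Import all_classical all_reals all_analysis.
Set Implicit Arguments. Unset Strict Implicit. Unset Printing Implicit Defensive.
Import GRing.Theory Num.Theory.
Import numFieldNormedType.Exports.
Local Open Scope classical_set_scope.

(* Every vertex f vanishes at some point p and is then annihilated by the
   indicator 1_{p}; indicators of distinct points annihilate each other, so any
   two vertices are joined through 1_{p} and 1_{q}, and three points give the
   triangle 1_{a}, 1_{b}, 1_{c}.  The co-indicators 1_{X\{a}}, 1_{X\{b}} are at
   distance exactly 3: their product is 1 at a third point, and a common
   neighbour would vanish everywhere.  T1 is what puts these functions in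
   C_c(X)_F: each is locally constant off a single point. *)

Section SimpleGraphs.
Variables (V : Type) (adj : V -> V -> Prop).

Lemma walk0E u v : walk adj u v 0 -> u = v.
Proof. by move=> w; inversion w. Qed.

Lemma walkSE u v n : walk adj u v n.+1 -> exists2 w, adj u w & walk adj w v n.
Proof. by move=> w; inversion w; exists w0. Qed.

Lemma walk1E u v : walk adj u v 1 -> adj u v.
Proof. by case/walkSE=> w uw /walk0E <-. Qed.

Lemma walk2E u v : walk adj u v 2 -> exists2 w, adj u w & adj w v.
Proof. by case/walkSE=> w uw /walk1E; exists w. Qed.

Lemma graph_dist3 u v :
  walk adj u v 3 -> u <> v -> ~ adj u v ->
  (forall w, adj u w -> ~ adj w v) -> graph_dist adj u v 3.
Proof.
move=> w3 uv nadj nmid; split=> // -[|[|[|m]]] // w.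
- by move/walk0E: w.
- by move/walk1E: w.
- by case/walk2E: w => w uw /(nmid w uw).
Qed.

Lemma graph_girth_triangle x y z :
  (forall u v, adj u v -> u <> v) -> adj x y -> adj y z -> adj z x ->
  graph_girth adj 3.
Proof.
move=> adj_neq axy ayz azx.
have [xy yz zx] := And3 (adj_neq _ _ axy) (adj_neq _ _ ayz) (adj_neq _ _ azx).
split; last by move=> m [].
split=> //; exists (nth x [:: x; y; z]); split; last by case=> [|[|[|]]].
by case=> [|[|[|i]]] [|[|[|j]]] //= _ _ e; exfalso; congruence.
Qed.

End SimpleGraphs.

Section ZeroDivisorGraph.
Variables (R : realType) (X : topologicalType).
Hypothesis hT1 : accessible_space X.
Local Open Scope ring_scope.

Lemma in_CcF_cst_off_point (f : X -> R) (a : X) (c : R) :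
  (forall x, x <> a -> f x = c) -> in_CcF f.
Proof.
move=> fE; split.
  apply/finite_set_countable/(@sub_finite_set _ _ [set c; f a]).
    move=> _ [x _ <-]; have [->|xa] := pselect (x = a); first by right.
    by left; rewrite fE.
  by rewrite finite_setU; split; exact: finite_set1.
apply: (@sub_finite_set _ _ [set a]) (finite_set1 a) => x /= fx.
apply: contrapT => xa; apply: fx.
have Xa_open : open (~` [set a]) by rewrite openC; exact: accessible_closed_set1.
have fx_cst : \forall y \near x, f y = c.
  by apply: filterS (open_nbhs_nbhs (conj Xa_open xa)) => y /fE.
by have := near_cst_continuous c fx_cst.
Qed.

Lemma fmulC (f g : X -> R) : fmul f g = fmul g f.
Proof. by apply: funext => x; rewrite /fmul mulrC. Qed.

Lemma zd_adj_sym (f g : X -> R) : zd_adj f g -> zd_adj g f.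
Proof.
move=> [vf [vg [fg fg0]]]; split=> //; split=> //.
by split; [move/esym | rewrite fmulC].
Qed.

Lemma fun_neq0_exists (f : X -> R) : f <> fzero -> exists x, f x != 0.
Proof.
move=> f0; apply: contrapT => fN0; apply: f0; apply: funext => x.
by apply/eqP; apply: contrapT => fx; apply: fN0; exists x; apply/negP.
Qed.

Lemma fmul_eq0_at (f g : X -> R) x : fmul f g = fzero -> f x * g x = 0.
Proof. by move=> /(congr1 (fun h => h x)). Qed.

Lemma zd_vertex_has_root (f : X -> R) : zd_vertex f -> exists a, f a = 0.
Proof.
move=> [_ [_ [g [_ [/fun_neq0_exists[x gx] /(fmul_eq0_at x)/eqP]]]]].
by rewrite mulf_eq0 (negbTE gx) orbF => /eqP; exists x.
Qed.

Lemma indic1_id (a : X) : \1_[set a] a = 1 :> R.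
Proof. by rewrite indicE mem_set. Qed.

Lemma indic1_off (a x : X) : x <> a -> \1_[set a] x = 0 :> R.
Proof. by move=> xa; rewrite indicE memNset. Qed.

Lemma indicC1_id (a : X) : \1_(~` [set a]) a = 0 :> R.
Proof. by rewrite indicE memNset //= => /(_ erefl). Qed.

Lemma indicC1_off (a x : X) : x <> a -> \1_(~` [set a]) x = 1 :> R.
Proof. by move=> xa; rewrite indicE mem_set. Qed.

Lemma in_CcF_indic1 (a : X) : in_CcF (\1_[set a] : X -> R).
Proof. by apply: (in_CcF_cst_off_point (a := a) (c := 0)) => x /indic1_off. Qed.

Lemma in_CcF_indicC1 (a : X) : in_CcF (\1_(~` [set a]) : X -> R).
Proof. by apply: (in_CcF_cst_off_point (a := a) (c := 1)) => x /indicC1_off. Qed.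

Lemma indic1_neq0 (a : X) : (\1_[set a] : X -> R) <> fzero.
Proof. by move=> /(congr1 (fun h => h a)); rewrite indic1_id => /eqP; rewrite oner_eq0. Qed.

Lemma indicC1_neq0 (a b : X) : b <> a -> (\1_(~` [set a]) : X -> R) <> fzero.
Proof.
by move=> ba /(congr1 (fun h => h b)); rewrite indicC1_off // => /eqP; rewrite oner_eq0.
Qed.

Lemma fmul_indic1_root (f : X -> R) (a : X) : f a = 0 -> fmul f \1_[set a] = fzero.
Proof.
move=> fa; apply: funext => x; rewrite /fmul /fzero.
by have [->|xa] := pselect (x = a); [rewrite fa mul0r | rewrite indic1_off ?mulr0].
Qed.

Lemma zd_vertex_indic1 (a b : X) : b <> a -> zd_vertex (\1_[set a] : X -> R).
Proof.
move=> ba; split; first exact: in_CcF_indic1.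
split; first exact: indic1_neq0.
exists \1_[set b]; split; first exact: in_CcF_indic1.
split; first exact: indic1_neq0.
by apply: fmul_indic1_root; rewrite indic1_off.
Qed.

Lemma zd_vertex_indicC1 (a b : X) : b <> a -> zd_vertex (\1_(~` [set a]) : X -> R).
Proof.
move=> ba; split; first exact: in_CcF_indicC1.
split; first exact: indicC1_neq0 ba.
exists \1_[set a]; split; first exact: in_CcF_indic1.
split; first exact: indic1_neq0.
exact/fmul_indic1_root/indicC1_id.
Qed.

Lemma zd_adj_indic1 (f : X -> R) (a b : X) :
  b <> a -> zd_vertex f -> f a = 0 -> zd_adj f \1_[set a].
Proof.
move=> ba vf fa; split=> //; split; first exact: zd_vertex_indic1 ba.
split; last exact: fmul_indic1_root.
by move=> /(congr1 (fun h => h a)) /eqP; rewrite fa indic1_id eq_sym oner_eq0.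
Qed.

Lemma zd_adj_indic1_indic1 (a b : X) : a <> b -> zd_adj (\1_[set a] : X -> R) \1_[set b].
Proof.
move=> ab; have ba : b <> a by move/esym.
by apply: (zd_adj_indic1 ab); [exact: zd_vertex_indic1 ba | rewrite indic1_off].
Qed.

Lemma indicC1_neq (a b : X) : a <> b -> (\1_(~` [set a]) : X -> R) <> \1_(~` [set b]).
Proof.
move=> ab /(congr1 (fun h => h a)) /eqP.
by rewrite indicC1_id indicC1_off // eq_sym oner_eq0.
Qed.

Lemma indicC1_not_adj (a b c : X) : c <> a -> c <> b ->
  ~ zd_adj (\1_(~` [set a]) : X -> R) \1_(~` [set b]).
Proof.
move=> ca cb [_ [_ [_ /(fmul_eq0_at c) /eqP]]].
by rewrite !indicC1_off // mulr1 oner_eq0.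
Qed.

Lemma indicC1_no_common_neighbour (a b : X) (w : X -> R) : a <> b ->
  zd_adj \1_(~` [set a]) w -> ~ zd_adj w \1_(~` [set b]).
Proof.
move=> ab [_ [[_ [w0 _]] [_ aw0]]] [_ [_ [_ wb0]]]; apply: w0.
apply: funext => x; rewrite /fzero.
have [->|xa] := pselect (x = a).
  by have := fmul_eq0_at a wb0; rewrite indicC1_off // mulr1.
by have := fmul_eq0_at x aw0; rewrite indicC1_off // mul1r.
Qed.

Section ThreePoints.
Variables a b c : X.
Hypotheses (ab : a <> b) (ac : a <> c) (bc : b <> c).

Let ba : b <> a. Proof. by move/esym. Qed.
Let ca : c <> a. Proof. by move/esym. Qed.
Let cb : c <> b. Proof. by move/esym. Qed.

Lemma zd_walk_le3 (u v : X -> R) :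
  zd_vertex u -> zd_vertex v -> exists2 n, (n <= 3)%N & walk zd_adj u v n.
Proof.
have other (x : X) : exists y, y <> x.
  by have [->|xa] := pselect (x = a); [exists b | exists a => /esym].
move=> vu vv.
have [p up] := zd_vertex_has_root vu; have [q vq] := zd_vertex_has_root vv.
have [y yp] := other p; have [z zq] := other q.
have u_p := zd_adj_indic1 yp vu up.
have q_v := zd_adj_sym (zd_adj_indic1 zq vv vq).
have [pq|pq] := pselect (p = q).
  rewrite -pq in q_v.
  by exists 2%N => //; apply: walk_cons u_p _; apply: walk_cons q_v _; exact: walk_nil.
exists 3%N => //; apply: walk_cons u_p _; apply: walk_cons (zd_adj_indic1_indic1 pq) _.
by apply: walk_cons q_v _; exact: walk_nil.
Qed.

Lemma zd_dist_indicC1 :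
  graph_dist zd_adj (\1_(~` [set a]) : X -> R) \1_(~` [set b]) 3%N.
Proof.
apply: graph_dist3.
- apply: walk_cons (zd_adj_indic1 ba (zd_vertex_indicC1 ba) (indicC1_id _)) _.
  apply: walk_cons (zd_adj_indic1_indic1 ab) _.
  have vb := zd_vertex_indicC1 ab.
  apply: walk_cons (zd_adj_sym (zd_adj_indic1 ab vb (indicC1_id _))) _.
  exact: walk_nil.
- exact: indicC1_neq.
- exact: indicC1_not_adj ca cb.
- by move=> w; apply: indicC1_no_common_neighbour.
Qed.

Lemma zd_graph_diam3 : graph_diam (@zd_vertex X R) zd_adj 3%N.
Proof.
split=> [u v vu vv|]; first by have [n] := zd_walk_le3 vu vv; exists n.
exists \1_(~` [set a]), \1_(~` [set b]); split; first exact: zd_vertex_indicC1 ba.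
by split; [exact: zd_vertex_indicC1 ab | exact: zd_dist_indicC1].
Qed.

Lemma zd_graph_girth3 : graph_girth (@zd_adj X R) 3%N.
Proof.
apply: (graph_girth_triangle (x := \1_[set a]) (y := \1_[set b]) (z := \1_[set c])).
- by move=> f g [_ [_ []]].
- exact: zd_adj_indic1_indic1 ab.
- exact: zd_adj_indic1_indic1 bc.
- exact: zd_adj_indic1_indic1 ca.
Qed.

End ThreePoints.

End ZeroDivisorGraph.

Theorem theorem8p7 (R : realType) (X : topologicalType)
  (hT1 : @accessible_space X)
  (h3 : exists a b c : X, a <> b /\ a <> c /\ b <> c) :
  graph_diam (@zd_vertex X R) (@zd_adj X R) 3 /\
  graph_girth (@zd_adj X R) 3.
Proof.
have [a [b [c [ab [ac bc]]]]] := h3.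
split; [exact: (zd_graph_diam3 _ hT1 ab ac bc) | exact: (zd_graph_girth3 _ hT1 ab ac bc)].
Qed.
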